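(* Let $X\in\mathbb{R}^{m\times n}$, $\lambda>0$, and let $f:\mathbb{R}^{m\times n}\to\mathbb{R}$ be an arbitrary function. Consider the original R-PCA problem $$\min_{A,E\in\mathbb{R}^{m\times n}} \operatorname{rank}(A)+\lambda f(E)\quad\text{s.t.}\quad X=A+E, \tag{P}$$ and the original R-LRR problem $$\min_{Z\in\mathbb{R}^{n\times n},\,E\in\mathbb{R}^{m\times n}} \operatorname{rank}(Z)+\lambda f(E)\quad\text{s.t.}\quad X-E=(X-E)Z. \tag{Q}$$ (i) Let $(A^*,E^* )$ be any minimizer of (P) and let $A^*=U_{A^*}\Sigma_{A^*}V_{A^*}^T$ be its skinny SVD. Then for every matrix $S\in\mathbb{R}^{n\times \operatorname{rank}(A^* )}$ with $V_{A^*}^TS=0$, the pair $\big((A^* )^\dagger A^*+SV_{A^*}^T,\;E^*\big)$ is an optimal solution of (Q). (ii) Conversely, if $(Z^*,E^* )$ is an optimal solution of (Q), then $(X-E^*,E^* )$ is a minimizer of (P).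
   Context: $M^\dagger$ denotes the Moore–Penrose pseudo-inverse of $M$. The skinny SVD of a matrix $A$ of rank $r$ is $A=U_A\Sigma_AV_A^T$ with $U_A,V_A$ having $r$ orthonormal columns and $\Sigma_A$ an $r\times r$ diagonal matrix with positive diagonal entries. *)

(* real matrices over an arbitrary real closed field R. *)
From HB Require Import structures.
From mathcomp Require Import all_boot all_order all_algebra.
Set Implicit Arguments. Unset Strict Implicit. Unset Printing Implicit Defensive.
Import Order.TTheory GRing.Theory Num.Theory.
Local Open Scope ring_scope.

(* B is the Moore--Penrose pseudo-inverse of A (the four Penrose conditions;
   such a B is unique). *)
Definition is_pinv (R : rcfType) (m n : nat) (A : 'M[R]_(m, n)) (B : 'M[R]_(n, m)) :=
  [/\ A *m B *m A = A, B *m A *m B = B,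
      (A *m B)^T = A *m B & (B *m A)^T = B *m A].

Definition skinny_svd (R : rcfType) (m n : nat) (A : 'M[R]_(m, n))
  (U : 'M[R]_(m, \rank A)) (Sig : 'M[R]_(\rank A)) (V : 'M[R]_(n, \rank A)) :=
  [/\ A = U *m Sig *m V^T, U^T *m U = 1%:M, V^T *m V = 1%:M,
      (forall i j, i != j -> Sig i j = 0) & (forall i, 0 < Sig i i)].

Definition minP (R : rcfType) (m n : nat) (X : 'M[R]_(m, n)) (lam : R)
  (f : 'M[R]_(m, n) -> R) (A E : 'M[R]_(m, n)) :=
  X = A + E /\
  forall A' E' : 'M[R]_(m, n), X = A' + E' ->
    (\rank A)%:R + lam * f E <= (\rank A')%:R + lam * f E'.

Definition minQ (R : rcfType) (m n : nat) (X : 'M[R]_(m, n)) (lam : R)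
  (f : 'M[R]_(m, n) -> R) (Z : 'M[R]_n) (E : 'M[R]_(m, n)) :=
  X - E = (X - E) *m Z /\
  forall (Z' : 'M[R]_n) (E' : 'M[R]_(m, n)), X - E' = (X - E') *m Z' ->
    (\rank Z)%:R + lam * f E <= (\rank Z')%:R + lam * f E'.

From HB Require Import structures.
From mathcomp Require Import all_boot all_order all_algebra.
Set Implicit Arguments. Unset Strict Implicit. Unset Printing Implicit Defensive.
Import Order.TTheory GRing.Theory Num.Theory.
Local Open Scope ring_scope.

(* Both problems have the same optimal value.  Any Z with B = B Z has rank at
   least rank B, while the oblique projection pinv(B) B attains rank B; hence
   (Q) at noise E costs exactly rank (X - E) + lam f(E), which is the cost of
   (P) at (X - E, E).  The matrix A^+ A + S V^T is such a rank-optimal Z for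
   B = A, because it factors through V^T and A S = 0. *)

Section FixingMatrices.

Variables (R : fieldType) (m n : nat).

Lemma mxrank_le_fixing (B : 'M[R]_(m, n)) (Z : 'M[R]_n) :
  B *m Z = B -> (\rank B <= \rank Z)%N.
Proof. by move=> BZ; rewrite -{1}BZ mxrankM_maxr. Qed.

Lemma mulmx_pinvmx_fixing (A : 'M[R]_(m, n)) : A *m (pinvmx A *m A) = A.
Proof. by rewrite mulmxA (mulmxKpV (submx_refl A)). Qed.

Lemma mxrank_pinvmx_fixing (A : 'M[R]_(m, n)) :
  (\rank (pinvmx A *m A) <= \rank A)%N.
Proof. exact: mxrankM_maxr. Qed.

Variable r : nat.
Variables (A : 'M[R]_(m, n)) (W : 'M[R]_(m, r)) (V : 'M[R]_(n, r)).
Hypothesis defA : A = W *m V^T.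

Lemma mxrank_add_mulmx_tr_le (B : 'M[R]_(n, m)) (S : 'M[R]_(n, r)) :
  (\rank (B *m A + S *m V^T)%R <= r)%N.
Proof.
rewrite defA mulmxA -mulmxDl.
exact: leq_trans (mxrankM_maxr _ _) (rank_leq_row _).
Qed.

Lemma mulmx_inner_inverse_fixing (B : 'M[R]_(n, m)) (S : 'M[R]_(n, r)) :
  A *m B *m A = A -> V^T *m S = 0 -> A *m (B *m A + S *m V^T) = A.
Proof.
move=> ABA VS0; have AS0 : A *m S = 0 by rewrite defA -mulmxA VS0 mulmx0.
by rewrite mulmxDr !mulmxA ABA AS0 mul0mx addr0.
Qed.

End FixingMatrices.

Section RobustProblems.

Variables (R : rcfType) (m n : nat) (X : 'M[R]_(m, n)) (lam : R).
Variable f : 'M[R]_(m, n) -> R.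

Lemma minP_le_feasibleQ (A E : 'M[R]_(m, n)) (Z' : 'M[R]_n) (E' : 'M[R]_(m, n)) :
  minP X lam f A E -> X - E' = (X - E') *m Z' ->
  (\rank A)%:R + lam * f E <= (\rank Z')%:R + lam * f E'.
Proof.
move=> [_ minAE] feasZ'.
apply: le_trans (minAE (X - E') E' (esym (subrK E' X))) _.
by rewrite lerD2r ler_nat mxrank_le_fixing.
Qed.

Lemma minQ_le_feasibleP (Z : 'M[R]_n) (E A' E' : 'M[R]_(m, n)) :
  minQ X lam f Z E -> X = A' + E' ->
  (\rank Z)%:R + lam * f E <= (\rank A')%:R + lam * f E'.
Proof.
move=> [_ minZE] defX.
have defA' : X - E' = A' by rewrite defX addrK.
have feasQ : X - E' = (X - E') *m (pinvmx A' *m A').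
  by rewrite defA' mulmx_pinvmx_fixing.
apply: le_trans (minZE _ E' feasQ) _.
by rewrite lerD2r ler_nat mxrank_pinvmx_fixing.
Qed.

End RobustProblems.

Theorem theorem1 (R : rcfType) (m n : nat) (X : 'M[R]_(m, n)) (lam : R)
  (f : 'M[R]_(m, n) -> R) (hlam : 0 < lam) :
  (forall A E : 'M[R]_(m, n), minP X lam f A E ->
     forall (U : 'M[R]_(m, \rank A)) (Sig : 'M[R]_(\rank A)) (V : 'M[R]_(n, \rank A)),
       @skinny_svd R m n A U Sig V ->
     forall Apinv : 'M[R]_(n, m), is_pinv A Apinv ->
     forall S : 'M[R]_(n, \rank A), V^T *m S = 0 ->
       minQ X lam f (Apinv *m A + S *m V^T) E)
  /\
  (forall (Z : 'M[R]_n) (E : 'M[R]_(m, n)), minQ X lam f Z E ->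
     minP X lam f (X - E) E).
Proof.
split.
  move=> A E minAE U Sig V [defA _ _ _ _] Ap [AApA _ _ _] S VS0.
  have defXE : X - E = A by rewrite minAE.1 addrK.
  split; first by rewrite defXE (mulmx_inner_inverse_fixing defA).
  move=> Z' E' feasZ'; apply: le_trans (minP_le_feasibleQ minAE feasZ').
  by rewrite lerD2r ler_nat (mxrank_add_mulmx_tr_le defA).
move=> Z E minZE; split; first by rewrite subrK.
move=> A' E' defX; apply: le_trans (minQ_le_feasibleP minZE defX).
by rewrite lerD2r ler_nat mxrank_le_fixing // -minZE.1.
Qed.
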